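(* Let $(D,\subseteq)$ be a complete lattice and let $T:D\to D$ be a contracting operator. Then $T$ is order independent in the sense of Definition I if and only if it is order independent in the sense of Definition II.
   Context: Let $(D,\subseteq)$ be a complete lattice with largest element $\top$. For an operator $T:D\to D$: $T$ is contracting if $T(G)\subseteq G$ for all $G$; a fixpoint of $T$ is $G$ with $T(G)=G$. Iterations: $T^0:=\top$, $T^{\alpha+1}:=T(T^\alpha)$, $T^\beta:=\bigcap_{\alpha<\beta}T^\alpha$ for limit $\beta$. The closure ordinal $\alpha_T$ is the least $\alpha$ with $T^{\alpha+1}=T^\alpha$ (if it exists) and $T^{\alpha_T}$ is then the outcome of $T$ (for contracting $T$ the outcome always exists). Definition I (for contracting $T$): $T$ is order independent if $R^{\alpha_R}=T^{\alpha_T}$ for every operator $R:D\to D$ such that for all ordinals $\alpha$: (a) $T(R^\alpha)\subseteq R(R^\alpha)\subseteq R^\alpha$, and (b) if $T(R^\alpha)\subsetneq R^\alpha$ then $R(R^\alpha)\subsetneq R^\alpha$. Definition II (for arbitrary $T$): an operator $R:D\to D$ is a relaxation of $T$ if for all ordinals $\alpha$: (1) $T(R^\alpha)\subseteq R(R^\alpha)$; (2) if $T(R^\alpha)\subseteq R^\alpha$ then $R(R^\alpha)\subseteq R^\alpha$; (3) if $R^\alpha$ is a fixpoint of $R$ then $R^\alpha$ is a fixpoint of $T$. $T$ is order independent if the set $\{G\mid G$ is the outcome of some relaxation of $T\}$ has at most one element. *)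

Record complete_lattice := CompleteLattice {
  cl_car :> Type;
  cl_le : cl_car -> cl_car -> Prop;
  cl_le_refl : forall x, cl_le x x;
  cl_le_trans : forall x y z, cl_le x y -> cl_le y z -> cl_le x z;
  cl_le_antisym : forall x y, cl_le x y -> cl_le y x -> x = y;
  cl_meet : (cl_car -> Prop) -> cl_car;
  cl_meet_lb : forall (S : cl_car -> Prop) x, S x -> cl_le (cl_meet S) x;
  cl_meet_glb : forall (S : cl_car -> Prop) y,
      (forall x, S x -> cl_le y x) -> cl_le y (cl_meet S)
}.

Definition cl_top (L : complete_lattice) : L := cl_meet L (fun _ => False).

Definition cl_lt (L : complete_lattice) (x y : L) : Prop := cl_le L x y /\ x <> y.

(** Well-ordered types: used to index transfinite iterations.  Every ordinal
    is the order type of an initial segment of such a type and, conversely,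
    every element of such a type determines an ordinal (the order type of its
    strict initial segment). *)
Record well_order := WellOrder {
  wo_car :> Type;
  wo_lt : wo_car -> wo_car -> Prop;
  wo_wf : well_founded wo_lt;
  wo_trans : forall x y z, wo_lt x y -> wo_lt y z -> wo_lt x z;
  wo_total : forall x y, wo_lt x y \/ x = y \/ wo_lt y x
}.

Definition imm_pred (W : well_order) (p w : W) : Prop :=
  wo_lt W p w /\ ~ (exists v, wo_lt W p v /\ wo_lt W v w).

(** f : W -> L is the transfinite iteration of R along W:
    f at a minimum is top (meet of the empty family), at a successor of p it is
    R (f p), at a limit it is the meet of all earlier values. *)
Definition is_iteration (L : complete_lattice) (R : L -> L)
  (W : well_order) (f : W -> L) : Prop :=
  forall w : W,
    (forall p, imm_pred W p w -> f w = R (f p)) /\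
    ((forall p, ~ imm_pred W p w) ->
       f w = cl_meet L (fun x => exists v, wo_lt W v w /\ x = f v)).

(** "for all ordinals alpha, P (R^alpha)" *)
Definition forall_iterates (L : complete_lattice) (R : L -> L) (P : L -> Prop) : Prop :=
  forall (W : well_order) (f : W -> L), is_iteration L R W f ->
    forall w : W, P (f w).

Definition contracting (L : complete_lattice) (T : L -> L) : Prop :=
  forall G, cl_le L (T G) G.

(** G is the outcome of R: G = R^(alpha_R), where alpha_R is the least ordinal
    alpha with R^(alpha+1) = R^alpha. *)
Definition outcome (L : complete_lattice) (R : L -> L) (G : L) : Prop :=
  exists (W : well_order) (f : W -> L) (w : W),
    is_iteration L R W f /\ f w = G /\ R G = G /\
    (forall v, wo_lt W v w -> R (f v) <> f v).

Definition order_independent_I (L : complete_lattice) (T : L -> L) : Prop :=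
  forall R : L -> L,
    forall_iterates L R (fun G =>
      (cl_le L (T G) (R G) /\ cl_le L (R G) G) /\
      (cl_lt L (T G) G -> cl_lt L (R G) G)) ->
    exists G, outcome L R G /\ outcome L T G.

Definition relaxation (L : complete_lattice) (T R : L -> L) : Prop :=
  forall_iterates L R (fun G =>
    cl_le L (T G) (R G) /\
    (cl_le L (T G) G -> cl_le L (R G) G) /\
    (R G = G -> T G = G)).

Definition order_independent_II (L : complete_lattice) (T : L -> L) : Prop :=
  forall (R1 R2 : L -> L) (G1 G2 : L),
    relaxation L T R1 -> relaxation L T R2 ->
    outcome L R1 G1 -> outcome L R2 G2 -> G1 = G2.

From Stdlib Require Import Classical ClassicalEpsilon ProofIrrelevance.

(* For a contracting [T], an operator [R] satisfies (a) and (b) of Definition I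
   exactly when it is a relaxation of [T]: both force the iterates of [R] to
   descend, and along descending iterates (b) is (3) read contrapositively.
   [T] is one such operator, so each definition says that all of them share
   the outcome of [T], and the equivalence reduces to two facts about
   transfinite iteration.  Outcomes are unique, because iterations of one
   operator along two well-orders agree at points of equal order type.
   Outcomes exist when the iterates descend: the tower of a contracting [S]
   (the least set closed under [S] and under arbitrary meets) is a chain
   well-ordered by reverse inclusion (Bourbaki-Witt), so it indexes an
   iteration of [S] ending in a fixpoint; taking for [S] the operator equal to
   [R] where [R] descends and to the identity elsewhere yields an iteration of
   [R]. *)

Lemma wo_irrefl (W : well_order) (x : W) : ~ wo_lt W x x.
Proof.
  induction (wo_wf W x) as [x _ IH]. intro Hx. exact (IH x Hx Hx).
Qed.

Lemma wo_least (W : well_order) (P : W -> Prop) (x : W) :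
  P x -> exists m, P m /\ forall y, wo_lt W y m -> ~ P y.
Proof.
  induction (wo_wf W x) as [x _ IH]. intro Px.
  destruct (classic (exists y, wo_lt W y x /\ P y)) as [[y [Hyx Py]]|Hmin].
  - exact (IH y Hyx Py).
  - exists x. split; [exact Px|]. intros y Hyx Py. apply Hmin. eauto.
Qed.

(* [same_type W1 W2 a b]: the initial segments of [W1] below [a] and of [W2]
   below [b] are order-isomorphic, i.e. [a] and [b] denote the same ordinal. *)
Inductive same_type (W1 W2 : well_order) : W1 -> W2 -> Prop :=
| same_type_intro a b :
    (forall u, wo_lt W1 u a -> exists u', wo_lt W2 u' b /\ same_type W1 W2 u u') ->
    (forall u', wo_lt W2 u' b -> exists u, wo_lt W1 u a /\ same_type W1 W2 u u') ->
    same_type W1 W2 a b.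

Section SameType.

Variables W1 W2 : well_order.

Lemma same_type_below_l a b : same_type W1 W2 a b ->
  forall u, wo_lt W1 u a -> exists u', wo_lt W2 u' b /\ same_type W1 W2 u u'.
Proof. now intros []. Qed.

Lemma same_type_below_r a b : same_type W1 W2 a b ->
  forall u', wo_lt W2 u' b -> exists u, wo_lt W1 u a /\ same_type W1 W2 u u'.
Proof. now intros []. Qed.

Lemma same_type_sym a b : same_type W1 W2 a b -> same_type W2 W1 b a.
Proof.
  revert b. induction (wo_wf W1 a) as [a _ IH]. intros b Hab.
  constructor.
  - intros u' Hu'. destruct (same_type_below_r a b Hab u' Hu') as [u [Hu Huu']].
    exists u. split; [exact Hu|]. exact (IH u Hu u' Huu').
  - intros u Hu. destruct (same_type_below_l a b Hab u Hu) as [u' [Hu' Huu']].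
    exists u'. split; [exact Hu'|]. exact (IH u Hu u' Huu').
Qed.

Lemma same_type_inj a z y :
  same_type W1 W2 a y -> same_type W1 W2 z y -> a = z.
Proof.
  revert z y. induction (wo_wf W1 a) as [a _ IH]. intros z y Hay Hzy.
  destruct (wo_total W1 a z) as [Haz|[Haz|Hza]]; [exfalso|exact Haz|exfalso].
  - destruct (same_type_below_l z y Hzy a Haz) as [y1 [Hy1 Hay1]].
    destruct (same_type_below_r a y Hay y1 Hy1) as [a1 [Ha1 Ha1y1]].
    rewrite (IH a1 Ha1 a y1 Ha1y1 Hay1) in Ha1. exact (wo_irrefl _ _ Ha1).
  - destruct (same_type_below_l a y Hay z Hza) as [y1 [Hy1 Hzy1]].
    destruct (same_type_below_r z y Hzy y1 Hy1) as [z1 [Hz1 Hz1y1]].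
    rewrite (IH z1 (wo_trans _ _ _ _ Hz1 Hza) z y1 Hz1y1 Hzy1) in Hz1.
    exact (wo_irrefl _ _ Hz1).
Qed.

Lemma same_type_lt a b a' b' :
  same_type W1 W2 a a' -> same_type W1 W2 b b' -> wo_lt W2 b' a' -> wo_lt W1 b a.
Proof.
  intros Haa' Hbb' Hb'a'.
  destruct (same_type_below_r a a' Haa' b' Hb'a') as [c [Hca Hcb']].
  now rewrite (same_type_inj c b b' Hcb' Hbb') in Hca.
Qed.

Lemma same_type_imm_pred a b p : same_type W1 W2 a b -> imm_pred W1 p a ->
  exists p', imm_pred W2 p' b /\ same_type W1 W2 p p'.
Proof.
  intros Hab [Hpa Hgap]. destruct (same_type_below_l a b Hab p Hpa) as [p' [Hp'b Hpp']].
  exists p'. split; [|exact Hpp']. split; [exact Hp'b|].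
  intros [v' [Hp'v' Hv'b]]. destruct (same_type_below_r a b Hab v' Hv'b) as [v [Hva Hvv']].
  apply Hgap. exists v. split; [exact (same_type_lt v p v' p' Hvv' Hpp' Hp'v')|exact Hva].
Qed.

(* Either [w1] has a counterpart in [W2] or [w2] has one in [W1]: compare the
   least element of [W1] without counterpart with the least element of [W2]
   not matched below it. *)
Lemma same_type_total (w1 : W1) (w2 : W2) :
  (exists x', same_type W1 W2 w1 x') \/ (exists x, same_type W1 W2 x w2).
Proof.
  apply NNPP. intro Hnone.
  assert (N1 : ~ exists x', same_type W1 W2 w1 x') by tauto.
  assert (N2 : ~ exists x, same_type W1 W2 x w2) by tauto.
  destruct (wo_least W1 (fun v => ~ exists x', same_type W1 W2 v x') w1 N1)
    as [v [Hv Hvmin]].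
  pose (matched := fun u' : W2 => exists u, wo_lt W1 u v /\ same_type W1 W2 u u').
  assert (Hw2 : ~ matched w2) by (intros [u [_ Huw2]]; eauto).
  destruct (wo_least W2 (fun u' => ~ matched u') w2 Hw2) as [m [Hm Hmmin]].
  apply Hv. exists m. constructor.
  - intros u Huv. destruct (NNPP _ (Hvmin u Huv)) as [u' Huu'].
    exists u'. split; [|exact Huu'].
    destruct (wo_total W2 u' m) as [Hlt|[Heq|Hgt]]; [exact Hlt| |]; exfalso; apply Hm.
    + subst. exists u. auto.
    + destruct (same_type_below_r u u' Huu' m Hgt) as [y [Hyu Hym]].
      exists y. split; [exact (wo_trans _ _ _ _ Hyu Huv)|exact Hym].
  - intros u' Hu'm. exact (NNPP _ (Hmmin u' Hu'm)).
Qed.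

End SameType.

Lemma meet_ext (L : complete_lattice) (S1 S2 : L -> Prop) :
  (forall x, S1 x <-> S2 x) -> cl_meet L S1 = cl_meet L S2.
Proof.
  intro HS. apply cl_le_antisym; apply cl_meet_glb; intros x Hx;
    apply cl_meet_lb, HS; exact Hx.
Qed.

Section Outcome.

Variables (L : complete_lattice) (R : L -> L).

Lemma iteration_same_type (W1 W2 : well_order) (f : W1 -> L) (g : W2 -> L) :
  is_iteration L R W1 f -> is_iteration L R W2 g ->
  forall a b, same_type W1 W2 a b -> f a = g b.
Proof.
  intros Hf Hg a. induction (wo_wf W1 a) as [a _ IH]. intros b Hab.
  destruct (classic (exists p, imm_pred W1 p a)) as [[p Hp]|Hlim].
  - destruct (same_type_imm_pred W1 W2 a b p Hab Hp) as [p' [Hp' Hpp']].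
    rewrite (proj1 (Hf a) p Hp), (proj1 (Hg b) p' Hp').
    f_equal. exact (IH p (proj1 Hp) p' Hpp').
  - assert (Hlim' : forall p', ~ imm_pred W2 p' b).
    { intros p' Hp'.
      destruct (same_type_imm_pred W2 W1 b a p' (same_type_sym W1 W2 a b Hab) Hp')
        as [p [Hp _]].
      eauto. }
    rewrite (proj2 (Hf a) (fun p Hp => Hlim (ex_intro _ p Hp))), (proj2 (Hg b) Hlim').
    apply meet_ext. intro x. split.
    + intros [v [Hva ->]]. destruct (same_type_below_l W1 W2 a b Hab v Hva) as [v' [Hv'b Hvv']].
      exists v'. split; [exact Hv'b|]. exact (IH v Hva v' Hvv').
    + intros [v' [Hv'b ->]]. destruct (same_type_below_r W1 W2 a b Hab v' Hv'b) as [v [Hva Hvv']].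
      exists v. split; [exact Hva|]. symmetry. exact (IH v Hva v' Hvv').
Qed.

Definition first_fixpoint (W : well_order) (f : W -> L) (w : W) : Prop :=
  R (f w) = f w /\ forall v, wo_lt W v w -> R (f v) <> f v.

Lemma first_fixpoint_same_type (W1 W2 : well_order) (f : W1 -> L) (g : W2 -> L)
    (w1 : W1) (w2 : W2) (x' : W2) :
  is_iteration L R W1 f -> is_iteration L R W2 g ->
  first_fixpoint W1 f w1 -> first_fixpoint W2 g w2 ->
  same_type W1 W2 w1 x' -> f w1 = g w2.
Proof.
  intros Hf Hg [Fix1 Before1] [Fix2 Before2] Hw1x'.
  pose proof (iteration_same_type W1 W2 f g Hf Hg w1 x' Hw1x') as Efg.
  destruct (wo_total W2 x' w2) as [Hlt|[<-|Hgt]].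
  - exfalso. apply (Before2 x' Hlt). now rewrite <- Efg.
  - exact Efg.
  - exfalso. destruct (same_type_below_r W1 W2 w1 x' Hw1x' w2 Hgt) as [u [Hu Huw2]].
    apply (Before1 u Hu). now rewrite (iteration_same_type W1 W2 f g Hf Hg u w2 Huw2).
Qed.

Lemma outcome_unique G1 G2 : outcome L R G1 -> outcome L R G2 -> G1 = G2.
Proof.
  intros [W1 [f [w1 [Hf [<- [Fix1 Before1]]]]]] [W2 [g [w2 [Hg [<- [Fix2 Before2]]]]]].
  destruct (same_type_total W1 W2 w1 w2) as [[x' Hw1x']|[x Hxw2]].
  - exact (first_fixpoint_same_type W1 W2 f g w1 w2 x' Hf Hg
             (conj Fix1 Before1) (conj Fix2 Before2) Hw1x').
  - symmetry. exact (first_fixpoint_same_type W2 W1 g f w2 w1 x Hg Hf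
             (conj Fix2 Before2) (conj Fix1 Before1) (same_type_sym W1 W2 x w2 Hxw2)).
Qed.

End Outcome.

Inductive tower (L : complete_lattice) (S : L -> L) : L -> Prop :=
| tower_step x : tower L S x -> tower L S (S x)
| tower_meet (P : L -> Prop) : (forall x, P x -> tower L S x) -> tower L S (cl_meet L P).

Section Tower.

Variables (L : complete_lattice) (S : L -> L).
Hypothesis S_contracting : contracting L S.

Definition extreme (c : L) : Prop :=
  forall y, tower L S y -> cl_lt L c y -> cl_le L c (S y).

Lemma extreme_comparable c : extreme c ->
  forall y, tower L S y -> cl_le L c y \/ cl_le L y (S c).
Proof.
  intros Hc y Ty. induction Ty as [z Tz IH | P HP IH].
  - destruct IH as [Hcz|Hzc].
    + destruct (classic (c = z)) as [<-|Hne].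
      * right. apply cl_le_refl.
      * left. exact (Hc z Tz (conj Hcz Hne)).
    + right. exact (cl_le_trans L _ _ _ (S_contracting z) Hzc).
  - destruct (classic (forall x, P x -> cl_le L c x)) as [Hlb|Hlb].
    + left. exact (cl_meet_glb L P c Hlb).
    + apply not_all_ex_not in Hlb as [x Hx]. apply imply_to_and in Hx as [Px Hcx].
      destruct (IH x Px) as [Hle|Hle]; [contradiction|].
      right. exact (cl_le_trans L _ _ _ (cl_meet_lb L P x Px) Hle).
Qed.

Lemma tower_extreme c : tower L S c -> extreme c.
Proof.
  intro Tc. induction Tc as [d Td IH | P HP IH]; intros y Ty [Hle Hne].
  - destruct (extreme_comparable d IH y Ty) as [Hdy|Hyd].
    + destruct (classic (d = y)) as [<-|Hdy'].
      * apply cl_le_refl.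
      * exact (cl_le_trans L _ _ _ (S_contracting d) (IH y Ty (conj Hdy Hdy'))).
    + exfalso. exact (Hne (cl_le_antisym L _ _ Hle Hyd)).
  - destruct (classic (forall q, P q -> cl_le L y (S q))) as [Hall|Hall].
    + exfalso. apply Hne, (cl_le_antisym L _ _ Hle), cl_meet_glb.
      intros q Pq. exact (cl_le_trans L _ _ _ (Hall q Pq) (S_contracting q)).
    + apply not_all_ex_not in Hall as [q Hq]. apply imply_to_and in Hq as [Pq Hyq].
      destruct (extreme_comparable q (IH q Pq) y Ty) as [Hqy|]; [|contradiction].
      destruct (classic (q = y)) as [<-|Hqy'].
      * destruct (extreme_comparable q (IH q Pq) _ (tower_meet L S P HP)) as [Hq|Hq];
          [|exact Hq].
        exfalso. exact (Hne (cl_le_antisym L _ _ Hle Hq)).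
      * exact (cl_le_trans L _ _ _ (cl_meet_lb L P q Pq) (IH q Pq y Ty (conj Hqy Hqy'))).
Qed.

Lemma tower_comparable x y : tower L S x -> tower L S y ->
  cl_le L x y \/ cl_le L y (S x).
Proof. intros Tx. exact (extreme_comparable x (tower_extreme x Tx) y). Qed.

Lemma tower_fixpoint_least m : tower L S m -> S m = m ->
  forall y, tower L S y -> cl_le L m y.
Proof.
  intros Tm Fm y Ty. induction Ty as [z Tz IH | P HP IH].
  - destruct (tower_comparable z m Tz Tm) as [Hzm|]; [|assumption].
    rewrite (cl_le_antisym L _ _ Hzm IH), Fm. apply cl_le_refl.
  - exact (cl_meet_glb L P m IH).
Qed.

Definition tower_elt : Type := sig (tower L S).

Definition tower_lt (a b : tower_elt) : Prop := cl_lt L (proj1_sig b) (proj1_sig a).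

Lemma tower_elt_eq (a b : tower_elt) : proj1_sig a = proj1_sig b -> a = b.
Proof. destruct a, b. apply subset_eq_compat. Qed.

Lemma tower_lt_trans a b c : tower_lt a b -> tower_lt b c -> tower_lt a c.
Proof.
  intros [Hba Hne1] [Hcb Hne2]. split; [exact (cl_le_trans L _ _ _ Hcb Hba)|].
  intro Eca. apply Hne1, (cl_le_antisym L _ _ Hba). rewrite <- Eca. exact Hcb.
Qed.

Lemma tower_lt_total a b : tower_lt a b \/ a = b \/ tower_lt b a.
Proof.
  destruct (classic (proj1_sig a = proj1_sig b)) as [Eab|Hne].
  - right; left. exact (tower_elt_eq a b Eab).
  - destruct (tower_comparable _ _ (proj2_sig a) (proj2_sig b)) as [Hab|Hba].
    + right; right. split; assumption.
    + left. split; [exact (cl_le_trans L _ _ _ Hba (S_contracting _))|].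
      intro E. exact (Hne (eq_sym E)).
Qed.

(* [M] is the least tower element containing every inaccessible one.  Either
   [M] is itself the largest inaccessible element, which is absurd, or all
   inaccessible elements lie below [S M], so [M] is a fixpoint, hence the
   least tower element, and the inaccessible [a] would have to equal it. *)
Lemma tower_lt_wf : well_founded tower_lt.
Proof.
  intro a. apply NNPP. intro Na.
  pose (Inacc := fun b : tower_elt => ~ Acc tower_lt b).
  pose (M := cl_meet L (fun t => tower L S t /\ forall b, Inacc b -> cl_le L (proj1_sig b) t)).
  assert (TM : tower L S M) by (apply tower_meet; intros x [Tx _]; exact Tx).
  assert (HM : forall b, Inacc b -> cl_le L (proj1_sig b) M).
  { intros b Hb. apply cl_meet_glb. intros x [_ Hx]. exact (Hx b Hb). }
  assert (Inacc_eq_M : forall b, Inacc b -> cl_le L M (proj1_sig b) -> b = exist _ M TM).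
  { intros b Hb HMb. apply tower_elt_eq, (cl_le_antisym L _ _ (HM b Hb) HMb). }
  destruct (classic (Inacc (exist _ M TM))) as [IM|AM].
  - apply IM. constructor. intros y [Hy Hne]. apply NNPP. intro Iy.
    exact (Hne (cl_le_antisym L _ _ Hy (HM y Iy))).
  - assert (HSM : forall b, Inacc b -> cl_le L (proj1_sig b) (S M)).
    { intros b Hb.
      destruct (tower_comparable M (proj1_sig b) TM (proj2_sig b)) as [HMb|]; [|assumption].
      exfalso. apply AM. now rewrite <- (Inacc_eq_M b Hb HMb). }
    assert (FM : S M = M).
    { apply (cl_le_antisym L _ _ (S_contracting M)), cl_meet_lb.
      split; [exact (tower_step L S M TM)|exact HSM]. }
    apply AM. rewrite <- (Inacc_eq_M a Na); [exact Na|].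
    exact (tower_fixpoint_least M TM FM _ (proj2_sig a)).
Qed.

Definition tower_wo : well_order :=
  WellOrder tower_elt tower_lt tower_lt_wf tower_lt_trans tower_lt_total.

Lemma tower_succ (p w : tower_wo) :
  imm_pred tower_wo p w -> proj1_sig w = S (proj1_sig p).
Proof.
  intros [[Hwp Hne] Hgap]. simpl in *. apply NNPP. intro Hw.
  destruct (tower_comparable _ _ (proj2_sig p) (proj2_sig w)) as [Hpw|HwS].
  - exact (Hne (cl_le_antisym L _ _ Hwp Hpw)).
  - destruct (classic (S (proj1_sig p) = proj1_sig p)) as [Fp|NFp].
    + exact (Hne (cl_le_antisym L _ _ Hwp
                   (tower_fixpoint_least _ (proj2_sig p) Fp _ (proj2_sig w)))).
    + apply Hgap. exists (exist _ _ (tower_step L S _ (proj2_sig p))).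
      split; split; simpl; auto.
Qed.

Lemma tower_limit (w : tower_wo) : (forall p, ~ imm_pred tower_wo p w) ->
  proj1_sig w = cl_meet L (fun x => exists v, tower_lt v w /\ x = proj1_sig v).
Proof.
  intro Hlim. set (Q := fun x => exists v, tower_lt v w /\ x = proj1_sig v).
  assert (Hw : cl_le L (proj1_sig w) (cl_meet L Q)).
  { apply cl_meet_glb. intros x [v [[Hv _] ->]]. exact Hv. }
  apply (cl_le_antisym L _ _ Hw), NNPP. intro Hne.
  assert (TQ : tower L S (cl_meet L Q)).
  { apply tower_meet. intros x [v [_ ->]]. exact (proj2_sig v). }
  apply (Hlim (exist _ _ TQ)). split.
  - split; [exact Hw|]. intro E. apply Hne. simpl in E. rewrite <- E. apply cl_le_refl.
  - intros [v [[Hv1 Hv2] Hv3]]. simpl in *.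
    apply Hv2, (cl_le_antisym L _ _ Hv1), cl_meet_lb. exists v. auto.
Qed.

Lemma tower_iteration : is_iteration L S tower_wo (@proj1_sig L (tower L S)).
Proof. intro w. split; [intros p; exact (tower_succ p w)|exact (tower_limit w)]. Qed.

End Tower.

Section Existence.

Variables (L : complete_lattice) (R : L -> L).

Definition descending_part (x : L) : L :=
  if excluded_middle_informative (cl_le L (R x) x) then R x else x.

Lemma descending_part_contracting : contracting L descending_part.
Proof.
  intro x. unfold descending_part.
  destruct (excluded_middle_informative _); [assumption|apply cl_le_refl].
Qed.

Lemma descending_part_eq x : cl_le L (R x) x -> descending_part x = R x.
Proof.
  intro Hx. unfold descending_part. now destruct (excluded_middle_informative _).
Qed.

Lemma descending_part_moved x : descending_part x <> x -> descending_part x = R x.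
Proof.
  unfold descending_part. now destruct (excluded_middle_informative _).
Qed.

Lemma descending_part_fixpoint x : R x = x -> descending_part x = x.
Proof.
  unfold descending_part. now destruct (excluded_middle_informative _).
Qed.

Let W := tower_wo L descending_part descending_part_contracting.

Lemma descending_tower_iteration :
  is_iteration L R W (@proj1_sig L (tower L descending_part)).
Proof.
  intro w. split; [|exact (tower_limit L descending_part descending_part_contracting w)].
  intros p Hp. pose proof (tower_succ L descending_part descending_part_contracting p w Hp) as Ew.
  transitivity (descending_part (proj1_sig p)); [exact Ew|]. apply descending_part_moved.
  intro E. apply (proj2 (proj1 Hp)). simpl. congruence.
Qed.

Theorem outcome_exists :
  forall_iterates L R (fun G => cl_le L (R G) G) -> exists G, outcome L R G.
Proof.
  intro Hdesc.
  pose (M := cl_meet L (tower L descending_part)).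
  assert (TM : tower L descending_part M) by (apply tower_meet; auto).
  assert (FM : descending_part M = M).
  { apply (cl_le_antisym L _ _ (descending_part_contracting M)), cl_meet_lb.
    exact (tower_step L _ M TM). }
  pose (m := exist _ M TM : W).
  assert (RM : R M = M).
  { rewrite <- (descending_part_eq M (Hdesc W _ descending_tower_iteration m)). exact FM. }
  exists M, W, (@proj1_sig L _), m.
  split; [exact descending_tower_iteration|]. split; [reflexivity|]. split; [exact RM|].
  intros v [Hv Hne] Fv. apply Hne, (cl_le_antisym L _ _ Hv).
  exact (tower_fixpoint_least L _ descending_part_contracting _ (proj2_sig v)
           (descending_part_fixpoint _ Fv) M TM).
Qed.

End Existence.

Definition refinement (L : complete_lattice) (T R : L -> L) : Prop :=
  forall_iterates L R (fun G =>
    (cl_le L (T G) (R G) /\ cl_le L (R G) G) /\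
    (cl_lt L (T G) G -> cl_lt L (R G) G)).

Lemma forall_iterates_weaken (L : complete_lattice) (R : L -> L) (P Q : L -> Prop) :
  (forall G, P G -> Q G) -> forall_iterates L R P -> forall_iterates L R Q.
Proof. intros HPQ HP W f Hf w. exact (HPQ _ (HP W f Hf w)). Qed.

Section Relaxation.

Variables (L : complete_lattice) (T : L -> L).
Hypothesis T_contracting : contracting L T.

Lemma relaxation_refinement R : relaxation L T R -> refinement L T R.
Proof.
  apply forall_iterates_weaken. intros G [HTR [Hdesc Hfix]].
  pose proof (Hdesc (T_contracting G)) as HRG.
  split; [split; assumption|]. intros [_ HTG]. split; [exact HRG|].
  intro E. exact (HTG (Hfix E)).
Qed.

Lemma refinement_relaxation R : refinement L T R -> relaxation L T R.
Proof.
  apply forall_iterates_weaken. intros G [[HTR HRG] Hstrict].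
  split; [exact HTR|]. split; [intros _; exact HRG|].
  intro E. apply NNPP. intro HTG.
  exact (proj2 (Hstrict (conj (T_contracting G) HTG)) E).
Qed.

Lemma refinement_descending R :
  refinement L T R -> forall_iterates L R (fun G => cl_le L (R G) G).
Proof. apply forall_iterates_weaken. intros G [[_ HRG] _]. exact HRG. Qed.

Lemma relaxation_refl : relaxation L T T.
Proof. intros W f Hf w. split; [apply cl_le_refl|]. split; intro H; exact H. Qed.

End Relaxation.

Theorem mainTheorem3 (L : complete_lattice) (T : L -> L) :
  contracting L T ->
  (order_independent_I L T <-> order_independent_II L T).
Proof.
  intro hT. split.
  - intros HI R1 R2 G1 G2 Rel1 Rel2 O1 O2.
    destruct (HI R1 (relaxation_refinement L T hT R1 Rel1)) as [G [OR1 OT1]].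
    destruct (HI R2 (relaxation_refinement L T hT R2 Rel2)) as [G' [OR2 OT2]].
    rewrite (outcome_unique L R1 G1 G O1 OR1), (outcome_unique L R2 G2 G' O2 OR2).
    exact (outcome_unique L T G G' OT1 OT2).
  - intros HII R HR.
    destruct (outcome_exists L R (refinement_descending L T R HR)) as [G OR].
    destruct (outcome_exists L T (fun W f _ w => hT (f w))) as [G' OT].
    exists G. split; [exact OR|].
    rewrite (HII R T G G' (refinement_relaxation L T hT R HR) (relaxation_refl L T) OR OT).
    exact OT.
Qed.
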